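(* Let $p,q\ge1$, $N\ge1$, let $\mu$ be a $q\times p$ matrix of measures, and assume $\mathscr M_N$ admits a Gauss--Borel factorization $\mathscr M_N=\mathscr L_N^{-1}\mathscr U_N^{-1}$. Write $N=N_qq+s_q=N_pp+s_p$ with $s_q\in\{0,\dots,q-1\}$, $s_p\in\{0,\dots,p-1\}$. Then \[\mathscr M^{[N+q,N]}=\begin{pmatrix}\mathscr L_N^{-1}\\ L^{[N+q,N]}\end{pmatrix}\mathscr U_N^{-1},\qquad \mathscr M^{[N,N+p]}=\mathscr L_N^{-1}\begin{pmatrix}\mathscr U_N^{-1} & U^{[N,N+p]}\end{pmatrix},\] where $L^{[N+q,N]}\in\mathbb R^{q\times N}$ and $U^{[N,N+p]}\in\mathbb R^{N\times p}$ are given by \[L^{[N+q,N]}=\int x^{N_q}\,\mathfrak X_{[q,s_q]}(x)\,\mathrm d\mu(x)\,A^{[N]}(x),\qquad U^{[N,N+p]}=\int B^{[N]}(x)\,\mathrm d\mu(x)\,\big(\mathfrak X_{[p,s_p]}(x)\big)^\top x^{N_p}.\]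
   Context: All matrices are indexed from $0$. $\mu$ is a $q\times p$ matrix of real measures with finite moments. For $r,n\ge1$, $X^{[n]}_{[r]}(x)$ is the $n\times r$ matrix whose row $k$ is $x^{\lfloor k/r\rfloor}e_{k\bmod r}^\top$ ($e_0,\dots,e_{r-1}$ standard basis of $\mathbb R^r$). Moment matrices: $\mathscr M^{[n,m]}=\int X^{[n]}_{[q]}\,\mathrm d\mu\,(X^{[m]}_{[p]})^\top$, $\mathscr M_n=\mathscr M^{[n,n]}$. A Gauss--Borel factorization is $\mathscr M_N=\mathscr L_N^{-1}\mathscr U_N^{-1}$ with $\mathscr L_N$ nonsingular lower triangular and $\mathscr U_N$ nonsingular upper triangular. $B^{[N]}(x):=\mathscr L_NX^{[N]}_{[q]}(x)$ ($N\times q$) and $A^{[N]}(x):=(X^{[N]}_{[p]}(x))^\top\mathscr U_N$ ($p\times N$). For $0\le s\le r$, $\mathfrak X_{[r,s]}(x)$ is the $r\times r$ block matrix $\begin{pmatrix}0_{(r-s)\times s}&I_{r-s}\\ xI_s&0_{s\times(r-s)}\end{pmatrix}$. *)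

From HB Require Import structures.
From mathcomp Require Import all_boot all_order all_algebra.
From mathcomp Require Import all_classical all_reals all_analysis.
Set Implicit Arguments. Unset Strict Implicit. Unset Printing Implicit Defensive.
Import Order.TTheory GRing.Theory Num.Theory.
Local Open Scope ring_scope.

(* A real (signed, finite) Borel measure on R, given by a Jordan-type
   decomposition nu = rm_pos - rm_neg into two positive measures. *)
Record realMeasure (R : realType) := RealMeasure {
  rm_pos : {measure set R -> \bar R};
  rm_neg : {measure set R -> \bar R} }.

(* finite moments: every x^k is integrable w.r.t. both parts
   (k = 0 gives finiteness of the measures). *)
Definition finite_moments (R : realType) (nu : realMeasure R) : Prop :=
  forall k : nat,
    (rm_pos nu).-integrable setT (fun x : R => (x ^+ k)%:E) /\
    (rm_neg nu).-integrable setT (fun x : R => (x ^+ k)%:E).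

Definition rmint (R : realType) (nu : realMeasure R) (f : R -> R) : R :=
  Rintegral (rm_pos nu) setT f - Rintegral (rm_neg nu) setT f.

(* matrix integral  \int F(x) dmu(x) G(x)  for a q x p matrix of measures mu *)
Definition mxint (R : realType) (q p n m : nat) (F : R -> 'M[R]_(n, q))
  (mu : 'I_q -> 'I_p -> realMeasure R) (G : R -> 'M[R]_(p, m)) : 'M[R]_(n, m) :=
  \matrix_(i < n, j < m)
    \sum_(a < q) \sum_(b < p) rmint (mu a b) (fun x => F x i a * G x b j).

Definition Xmx (R : realType) (n r : nat) (x : R) : 'M[R]_(n, r) :=
  \matrix_(k < n, j < r) (x ^+ (k %/ r)%N * (j == (k %% r)%N :> nat)%:R).

Definition moment (R : realType) (q p : nat) (mu : 'I_q -> 'I_p -> realMeasure R)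
  (n m : nat) : 'M[R]_(n, m) :=
  mxint (fun x => Xmx n q x) mu (fun x => (Xmx m p x)^T).

Definition gauss_borel (R : realType) (N : nat) (M L U : 'M[R]_N) : Prop :=
  [/\ is_trig_mx L, L \in unitmx, is_trig_mx U^T, U \in unitmx &
      M = invmx L *m invmx U].

(* \mathfrak X_{[r,s]}(x) = ( 0_{(r-s) x s}  I_{r-s} ; x I_s  0_{s x (r-s)} ) *)
Definition frakX (R : realType) (r s : nat) (x : R) : 'M[R]_r :=
  \matrix_(i < r, j < r)
    if (i < r - s)%N then (j == (i + s)%N :> nat)%:R
    else if (j == (i - (r - s))%N :> nat) then x else 0.

Definition Bvec (R : realType) (N q : nat) (L : 'M[R]_N) (x : R) : 'M[R]_(N, q) :=
  L *m Xmx N q x.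
Definition Avec (R : realType) (N p : nat) (U : 'M[R]_N) (x : R) : 'M[R]_(p, N) :=
  (Xmx N p x)^T *m U.

(* The first N rows of X^{[N+q]}_{[q]}(x) are X^{[N]}_{[q]}(x) and the last q
   rows are x^{N_q} 𝔛_{[q,s_q]}(x).  Hence M^{[N+q,N]} stacks M_N = L^{-1} U^{-1}
   on top of \int x^{N_q} 𝔛 dμ (X^{[N]}_{[p]})^T, and writing
   (X^{[N]}_{[p]})^T = A^{[N]} U^{-1} pulls the constant factor U^{-1} out of the
   integral; every integrand is a polynomial, hence integrable by finiteness of
   the moments.  The column extension M^{[N,N+p]} is the transpose of the row
   extension for the transposed matrix of measures, whose moment matrix M_N^T
   has the Gauss--Borel factorization (U^T)^{-1} (L^T)^{-1}. *)

From HB Require Import structures.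
From mathcomp Require Import all_boot all_order all_algebra.
From mathcomp Require Import all_classical all_reals all_analysis.
From mathcomp Require Import zify.
Set Implicit Arguments. Unset Strict Implicit.
Import Order.TTheory GRing.Theory Num.Theory.
Local Open Scope ring_scope.

Section PolynomialFunctions.
Variable R : realType.

Definition polyfun (f : R -> R) := exists P : {poly R}, f =1 horner P.

Lemma eq_polyfun f g : f =1 g -> polyfun f -> polyfun g.
Proof. by move=> fg [P fP]; exists P => x; rewrite -fg. Qed.

Lemma polyfunC c : polyfun (fun _ => c).
Proof. by exists c%:P => x; rewrite hornerC. Qed.

Lemma polyfunX : polyfun id.
Proof. by exists 'X => x; rewrite hornerX. Qed.

Lemma polyfunXn k : polyfun (fun x => x ^+ k).
Proof. by exists 'X^k => x; rewrite hornerXn. Qed.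

Lemma polyfunM f g : polyfun f -> polyfun g -> polyfun (fun x => f x * g x).
Proof. by move=> [P fP] [Q gQ]; exists (P * Q) => x; rewrite hornerM fP gQ. Qed.

Lemma polyfun_sum n (f : 'I_n -> R -> R) :
  (forall j, polyfun (f j)) -> polyfun (fun x => \sum_(j < n) f j x).
Proof.
move=> fpoly; have [P fP] := boolp.choice fpoly.
exists (\sum_(j < n) P j) => x.
by rewrite horner_sum; apply: eq_bigr => j _; apply: fP.
Qed.

End PolynomialFunctions.

Section MeasureWithMoments.
Variables (R : realType) (m : {measure set R -> \bar R}).
Hypothesis m_moments : forall k, m.-integrable setT (fun x : R => (x ^+ k)%:E).

Lemma integrable_polyfun f : polyfun f -> m.-integrable setT (EFin \o f).
Proof.
move=> [P fP].
have : m.-integrable setT (fun x => \sum_(i < size P) (P`_i)%:E * (x ^+ i)%:E)%E.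
  by apply: integrable_sum => // i _; apply: integrableZl.
apply: eq_integrable => // x _ /=.
by rewrite fP horner_coef -sumEFin; apply: eq_bigr => i _; rewrite EFinM.
Qed.

Lemma Rintegral_sum_polyfun n (f : 'I_n -> R -> R) :
  (forall j, polyfun (f j)) ->
  Rintegral m setT (fun x => \sum_(j < n) f j x) =
  \sum_(j < n) Rintegral m setT (f j).
Proof.
elim: n f => [|n IH] f fpoly.
  under eq_Rintegral do rewrite big_ord0.
  by rewrite big_ord0 Rintegral_cst // mul0r.
under eq_Rintegral do rewrite big_ord_recr.
rewrite big_ord_recr /= RintegralD // ?IH //.
- by apply: integrable_polyfun; apply: polyfun_sum.
- exact: integrable_polyfun.
Qed.

End MeasureWithMoments.

Section RealMeasureIntegral.
Variables (R : realType) (nu : realMeasure R).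
Hypothesis nu_moments : finite_moments nu.

Let pos_moments k : (rm_pos nu).-integrable setT (fun x : R => (x ^+ k)%:E).
Proof. by case: (nu_moments k). Qed.

Let neg_moments k : (rm_neg nu).-integrable setT (fun x : R => (x ^+ k)%:E).
Proof. by case: (nu_moments k). Qed.

Lemma rmint_sum n (f : 'I_n -> R -> R) :
  (forall j, polyfun (f j)) ->
  rmint nu (fun x => \sum_(j < n) f j x) = \sum_(j < n) rmint nu (f j).
Proof.
by move=> fpoly; rewrite /rmint !Rintegral_sum_polyfun // -sumrB.
Qed.

Lemma rmintMr f c : polyfun f -> rmint nu (fun x => f x * c) = rmint nu f * c.
Proof.
move=> fpoly; rewrite /rmint mulrBl.
by rewrite !RintegralZr //; apply: integrable_polyfun.
Qed.

End RealMeasureIntegral.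

Section PolynomialMatrices.
Variable R : realType.

Definition polymx m n (F : R -> 'M[R]_(m, n)) :=
  forall i j, polyfun (fun x => F x i j).

Lemma polymxC m n (C : 'M[R]_(m, n)) : polymx (fun _ => C).
Proof. by move=> i j; apply: polyfunC. Qed.

Lemma polymx_tr m n (F : R -> 'M[R]_(m, n)) :
  polymx F -> polymx (fun x => (F x)^T).
Proof. by move=> Fpoly i j; apply: eq_polyfun (Fpoly j i) => x; rewrite mxE. Qed.

Lemma polymxZ m n (f : R -> R) (F : R -> 'M[R]_(m, n)) :
  polyfun f -> polymx F -> polymx (fun x => f x *: F x).
Proof.
move=> fpoly Fpoly i j; apply: eq_polyfun (polyfunM fpoly (Fpoly i j)) => x.
by rewrite mxE.
Qed.

Lemma polymxM m n k (F : R -> 'M[R]_(m, n)) (G : R -> 'M[R]_(n, k)) :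
  polymx F -> polymx G -> polymx (fun x => F x *m G x).
Proof.
move=> Fpoly Gpoly i j.
have : polyfun (fun x => \sum_(l < n) F x i l * G x l j).
  by apply: polyfun_sum => l; apply: polyfunM.
by apply: eq_polyfun => x; rewrite mxE.
Qed.

Lemma polymx_Xmx n r : polymx (Xmx n r).
Proof.
move=> i j; apply: eq_polyfun (polyfunM (polyfunXn R (i %/ r)) (polyfunC _)) => x.
by rewrite mxE.
Qed.

Lemma polymx_frakX r s : polymx (frakX r s).
Proof.
move=> i j; case: (ltnP i (r - s)) => [ilt|ige].
  by apply: eq_polyfun (polyfunC _) => x; rewrite mxE ilt.
have [jE|jN] := eqVneq (j : nat) (i - (r - s))%N.
  by apply: eq_polyfun (polyfunX R) => x; rewrite mxE ltnNge ige /= jE eqxx.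
by apply: eq_polyfun (polyfunC (0 : R)) => x; rewrite mxE ltnNge ige /= (negbTE jN).
Qed.

End PolynomialMatrices.

Section MatrixIntegral.
Variables (R : realType) (q p : nat) (mu : 'I_q -> 'I_p -> realMeasure R).
Hypothesis mu_moments : forall a b, finite_moments (mu a b).

Lemma mxint_col_mx n1 n2 m (F1 : R -> 'M[R]_(n1, q)) (F2 : R -> 'M[R]_(n2, q))
    (G : R -> 'M[R]_(p, m)) :
  mxint (fun x => col_mx (F1 x) (F2 x)) mu G = col_mx (mxint F1 mu G) (mxint F2 mu G).
Proof.
apply/matrixP => i j; case: (split_ordP i) => k ->; rewrite ?col_mxEu ?col_mxEd !mxE;
  apply: eq_bigr => a _; apply: eq_bigr => b _; congr rmint; apply: boolp.funext => x;
  by rewrite ?col_mxEu ?col_mxEd.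
Qed.

Lemma mxint_mulmxr n m k (F : R -> 'M[R]_(n, q)) (G : R -> 'M[R]_(p, m))
    (C : 'M[R]_(m, k)) :
  polymx F -> polymx G -> mxint F mu G *m C = mxint F mu (fun x => G x *m C).
Proof.
move=> Fpoly Gpoly; apply/matrixP => i l; rewrite !mxE.
under eq_bigr => j _ do rewrite mxE big_distrl /=.
have integrandE a b : rmint (mu a b) (fun x => F x i a * (G x *m C) b l) =
    \sum_(j < m) rmint (mu a b) (fun x => F x i a * G x b j) * C j l.
  have -> : (fun x => F x i a * (G x *m C) b l) =
      (fun x => \sum_(j < m) F x i a * G x b j * C j l).
    by apply: boolp.funext => x; rewrite mxE big_distrr; apply: eq_bigr => j _; exact: mulrA.
  rewrite (@rmint_sum _ _ (mu_moments a b) m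
    (fun j x => F x i a * G x b j * C j l)) => [|j]; last first.
    by apply: polyfunM; [apply: polyfunM | apply: polyfunC].
  by apply: eq_bigr => j _; rewrite rmintMr //; apply: polyfunM.
under [RHS]eq_bigr do under eq_bigr do rewrite integrandE.
rewrite exchange_big /=; apply: eq_bigr => a _.
by under eq_bigr do rewrite big_distrl /=; rewrite exchange_big.
Qed.

End MatrixIntegral.

Section MomentMatrices.
Variable R : realType.

Lemma Xmx_rshift r N (x : R) (i a : 'I_r) : (0 < r)%N ->
  Xmx (N + r) r x (rshift N i) a = x ^+ (N %/ r) * frakX r (N %% r) x i a.
Proof.
move=> r_gt0; rewrite !mxE /=.
(* N + i = N_r r + (s + i), which passes to the next power of x iff s + i >= r *)
have Nr_lt : (N %% r < r)%N := ltn_pmod N r_gt0.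
rewrite {1 2}(divn_eq N r) -addnA divnMDl // modnMDl.
move: Nr_lt; set s := (N %% r)%N => s_lt; have i_lt := ltn_ord i.
case: ltnP => [i_small|i_large].
  have si_lt : (s + i < r)%N by lia.
  by rewrite (divn_small si_lt) (modn_small si_lt) addn0 addnC.
have siE : (s + i = 1 * r + (i - (r - s)))%N by lia.
have wrap_lt : (i - (r - s) < r)%N by lia.
rewrite siE divnMDl // modnMDl (divn_small wrap_lt) (modn_small wrap_lt) addn0 addn1 exprSr.
by case: eqP => _; [rewrite mulr1 mulrC | rewrite !mulr0].
Qed.

Lemma Xmx_col_mx r N (x : R) : (0 < r)%N ->
  Xmx (N + r) r x = col_mx (Xmx N r x) (x ^+ (N %/ r) *: frakX r (N %% r) x).
Proof.
move=> r_gt0; apply/matrixP => i a; case: (split_ordP i) => k ->.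
  by rewrite col_mxEu !mxE.
by rewrite col_mxEd Xmx_rshift // [RHS]mxE.
Qed.

Lemma trmx_mxint q p n m (F : R -> 'M[R]_(n, q)) (mu : 'I_q -> 'I_p -> realMeasure R)
    (G : R -> 'M[R]_(p, m)) :
  (mxint F mu G)^T = mxint (fun x => (G x)^T) (fun b a => mu a b) (fun x => (F x)^T).
Proof.
apply/matrixP => i j; rewrite !mxE exchange_big; apply: eq_bigr => b _.
apply: eq_bigr => a _; congr rmint; apply: boolp.funext => x.
by rewrite !mxE mulrC.
Qed.

Lemma trmx_moment q p (mu : 'I_q -> 'I_p -> realMeasure R) n m :
  (moment mu n m)^T = moment (fun b a => mu a b) m n.
Proof.
rewrite /moment trmx_mxint; congr mxint; apply: boolp.funext => x.
exact: trmxK.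
Qed.

Lemma gauss_borel_tr N (M L U : 'M[R]_N) :
  gauss_borel M L U -> gauss_borel M^T U^T L^T.
Proof.
case=> L_trig L_unit U_trig U_unit ->.
by split; rewrite ?trmxK ?unitmx_tr // trmx_mul !trmx_inv.
Qed.

End MomentMatrices.

Section GaussBorelExtension.
Variables (R : realType) (q p : nat) (mu : 'I_q -> 'I_p -> realMeasure R).
Hypothesis mu_moments : forall a b, finite_moments (mu a b).

Lemma moment_addn_gauss_borel N (L U : 'M[R]_N) : (0 < q)%N ->
  gauss_borel (moment mu N N) L U ->
  moment mu (N + q) N =
    col_mx (invmx L)
      (mxint (fun x => x ^+ (N %/ q) *: frakX q (N %% q) x) mu (Avec p U))
    *m invmx U.
Proof.
move=> q_gt0 [_ _ _ U_unit MNE].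
have XE : (fun x : R => Xmx (N + q) q x) =
    (fun x => col_mx (Xmx N q x) (x ^+ (N %/ q) *: frakX q (N %% q) x)).
  by apply: boolp.funext => x; apply: Xmx_col_mx.
rewrite /moment XE mxint_col_mx mul_col_mx; congr col_mx; first exact: MNE.
rewrite mxint_mulmxr //; last first.
- by apply: polymxM; [apply: polymx_tr; apply: polymx_Xmx | apply: polymxC].
- by apply: polymxZ; [apply: polyfunXn | apply: polymx_frakX].
by congr mxint; apply: boolp.funext => x; rewrite /Avec mulmxK.
Qed.

End GaussBorelExtension.

Theorem mainTheorem5 (R : realType) (p q N : nat)
  (hp : (0 < p)%N) (hq : (0 < q)%N) (hN : (0 < N)%N)
  (mu : 'I_q -> 'I_p -> realMeasure R)
  (hmu : forall a b, finite_moments (mu a b))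
  (L U : 'M[R]_N) (hGB : gauss_borel (moment mu N N) L U) :
  moment mu (N + q) N =
    col_mx (invmx L)
      (mxint (fun x => x ^+ (N %/ q)%N *: frakX q (N %% q)%N x) mu (Avec p U))
    *m invmx U
  /\
  moment mu N (N + p) =
    invmx L *m
      row_mx (invmx U)
        (mxint (Bvec q L) mu (fun x => x ^+ (N %/ p)%N *: (frakX p (N %% p)%N x)^T)).
Proof.
split; first exact: moment_addn_gauss_borel.
have hmu_tr b a : finite_moments ((fun b a => mu a b) b a) by apply: hmu.
have hGB_tr := gauss_borel_tr hGB; rewrite trmx_moment in hGB_tr.
apply: trmx_inj; rewrite trmx_moment (moment_addn_gauss_borel hmu_tr hp hGB_tr).
rewrite trmx_mul tr_row_mx !trmx_inv trmx_mxint.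
congr (col_mx _ _ *m _); congr mxint; apply: boolp.funext => x.
- by rewrite linearZ /= trmxK.
- by rewrite /Avec /Bvec trmx_mul.
Qed.
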